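(* Let $\theta=\tilde p/p$ be a rational inner function on $\mathbb{D}^2$ of degree $(1,1)$ with $p(z)=a+bz_1+cz_2+dz_1z_2$, and assume $p$ vanishes at $\tau=(\tau_1,\tau_2)\in\mathbb{T}^2$. Let $\lambda$ satisfy $\lambda^2=\bar ac-d\bar b$ and let $f(z)=\frac{\lambda(z_2-\tau_2)}{p(z)}$. Then \[(M_{z_1}^*f)(z)=f(z)\Big(-\frac{b+dz_2}{a+cz_2}\Big),\qquad (M_{z_1}^*\theta)(z)=f(z)\,\lambda\Big(\frac{z_2-\tau_2}{a+cz_2}\Big).\]
   Context: $\mathbb{D}$ is the open unit disk, $\mathbb{T}$ the unit circle. A rational inner function of degree $(1,1)$ can be written $\theta=\tilde p/p$ with $p$ a polynomial of degree at most one in each variable with no zeros on $\mathbb{D}^2$ and $\tilde p(z)=\bar az_1z_2+\bar bz_2+\bar cz_1+\bar d$, $p,\tilde p$ coprime. $M_{z_1}^*$ denotes the adjoint of multiplication by $z_1$ on the Hardy space $H^2(\mathbb{D}^2)$ (the backward shift in $z_1$: $(M_{z_1}^*F)(z)=(F(z)-F(0,z_2))/z_1$). *)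

From HB Require Import structures.
From mathcomp Require Import all_boot all_order all_algebra.
From mathcomp.real_closed Require Import complex.
From mathcomp Require Import mpoly.
Set Implicit Arguments. Unset Strict Implicit. Unset Printing Implicit Defensive.
Import Order.TTheory GRing.Theory Num.Theory.
Local Open Scope ring_scope.

(* The complex numbers are modelled as R[i] for a real closed field R
   (the genuine complex field is the instance R = reals). *)

(* p(z) = a + b z1 + c z2 + d z1 z2, as a polynomial in C[z1,z2]
   ('X_0 = z1, 'X_1 = z2). *)
Definition pol11 (C : comNzRingType) (a b c d : C) : {mpoly C[2]} :=
  a%:MP + b *: 'X_0 + c *: 'X_1 + d *: ('X_0 * 'X_1).

Definition ev11 (C : comNzRingType) (a b c d z1 z2 : C) : C :=
  a + b * z1 + c * z2 + d * z1 * z2.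

Definition ptil11 (R : rcfType) (a b c d : R[i]) : {mpoly R[i][2]} :=
  pol11 (conjc d) (conjc c) (conjc b) (conjc a).

Definition mcoprime (C : comNzRingType) (p q : {mpoly C[2]}) : Prop :=
  forall g r s : {mpoly C[2]}, p = g * r -> q = g * s -> (msize g <= 1)%N.

Definition inD (R : rcfType) (z : R[i]) : Prop := `|z| < 1.
Definition inT (R : rcfType) (z : R[i]) : Prop := `|z| = 1.

(* adjoint of multiplication by z1 on H^2(D^2) (backward shift in z1):
   (M_{z1}^* F)(z) = (F(z) - F(0, z2)) / z1, as in the paper (for z1 <> 0). *)
Definition bshift1 (C : fieldType) (F : C -> C -> C) (z1 z2 : C) : C :=
  (F z1 z2 - F 0 z2) / z1.

(* For fixed w in the disk, z1 |-> p(z1, w) = (a + c w) + (b + d w) z1 has no zero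
   in the disk, so |b + d w| <= |a + c w|; by continuity this persists for |w| = 1.
   With k = conj(a) c - d conj(b), on the circle |a + c u|^2 - |b + d u|^2 equals
   B + k u + conj(k u) for a real B: a nonnegative trigonometric polynomial of
   degree one, vanishing at tau2 because p(tau1, tau2) = 0.  It must have a double
   zero there, which is the identity
     (conj c + conj a z)(a + c z) - (conj d + conj b z)(b + d z) = k (z - tau2)^2.
   As functions of z1, f and theta are Moebius maps with explicit backward shifts,
   and the identity turns the one for theta into the stated form. *)

From HB Require Import structures.
From mathcomp Require Import all_boot all_order all_algebra.
From mathcomp.real_closed Require Import complex polyrcf.
From mathcomp Require Import mpoly.
From mathcomp Require Import ring lra.
Set Implicit Arguments. Unset Strict Implicit. Unset Printing Implicit Defensive.
Import Order.TTheory GRing.Theory Num.Theory.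
Local Open Scope ring_scope.

Section UnitCircle.
Variable R : rcfType.
Implicit Types (x y z u v w : R[i]).

Lemma sqr_norm_line_poly x y :
  exists q : {poly R}, forall t : R, `|x + (t%:C)%C * y| ^+ 2 = (q.[t]%:C)%C.
Proof.
case: x y => [x1 x2] [y1 y2].
exists ((x1%:P + y1 *: 'X) ^+ 2 + (x2%:P + y2 *: 'X) ^+ 2) => t.
rewrite -add_Re2_Im2 !hornerE /=; congr (_%:C)%C; ring.
Qed.

Lemma poly_ge0_right_end (p : {poly R}) (r s : R) :
  r < s -> (forall t, r <= t < s -> 0 <= p.[t]) -> 0 <= p.[s].
Proof.
move=> lt_rs p_ge0; rewrite leNgt; apply/negP => ps_lt0.
have := @poly_cont R s p (- p.[s]); rewrite oppr_gt0 => /(_ ps_lt0) [e e_gt0 near_s].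
pose h := Num.min e (s - r).
have h_gt0 : 0 < h by rewrite lt_min e_gt0 subr_gt0.
have [h_le_e h_le_sr] : h <= e /\ h <= s - r by rewrite !ge_min !lexx ?orbT.
have : 0 <= p.[s - h / 2] by apply: p_ge0; apply/andP; split; lra.
have : `|p.[s - h / 2] - p.[s]| < - p.[s].
  by apply: near_s; rewrite addrAC subrr add0r normrN ger0_norm; lra.
rewrite ltr_norml; lra.
Qed.

Lemma real_of_circle_ge0 w :
  (forall v, `|v| = 1 -> 0 <= w * (v - 1) + (w * (v - 1))^*) -> w^* = w.
Proof.
case: w => x y w_ge0; congr (_ +i* _)%C.
suff -> : y = 0 by rewrite oppr0.
have re_ge0 p q : p ^+ 2 + q ^+ 2 = 1 -> 0 <= x * (p - 1) - y * q.
  move=> pq1; have /w_ge0 : `|(p +i* q)%C| = 1 by rewrite normc_def /= pq1 sqrtr1.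
  rewrite addcJ pmulr_rge0 ?ltr0n // ler0c /=; lra.
(* test at v = - w^* / |w|, where w * v = - |w| *)
have [r0|r_neq0] := eqVneq (x ^+ 2 + y ^+ 2) 0; first nra.
pose r := Num.sqrt (x ^+ 2 + y ^+ 2).
have r_gt0 : 0 < r by rewrite sqrtr_gt0 lt0r r_neq0 /=; nra.
have r2 : r ^+ 2 = x ^+ 2 + y ^+ 2 by rewrite sqr_sqrtr //; nra.
have := re_ge0 (- x / r) (y / r).
rewrite !expr_div_n sqrrN -mulrDl -r2 divff ?r2 // => /(_ erefl).
have -> : x * (- x / r - 1) - y * (y / r) = - (r ^+ 2 / r) - x.
  by rewrite r2; field; exact: lt0r_neq0.
rewrite expr2 mulfK ?lt0r_neq0 //; nra.
Qed.

Lemma circle_ge0_double_root (B k t : R[i]) :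
  `|t| = 1 -> (forall u, `|u| = 1 -> 0 <= B + k * u + k^* * u^*) ->
  B + k * t + k^* * t^* = 0 ->
  forall z, k^* + B * z + k * z ^+ 2 = k * (z - t) ^+ 2.
Proof.
move=> t1 form_ge0 form_t z.
have tJt : t^* * t = 1 by rewrite mulrC -normCK t1 expr1n.
pose w := k * t.
have shift v : B + k * (t * v) + k^* * (t * v)^* = w * (v - 1) + (w * (v - 1))^*.
  rewrite -[LHS]subr0 -form_t /w !rmorphM rmorphB rmorph1 /=; ring.
have w_real : w^* = w.
  apply: real_of_circle_ge0 => v v1; rewrite -shift.
  by apply: form_ge0; rewrite normrM t1 v1 mulr1.
have -> : B = - (w + w^*) by rewrite -[B]subr0 -form_t /w rmorphM; ring.
have -> : k^* = w * t by rewrite -w_real /w rmorphM -mulrA tJt mulr1.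
by rewrite w_real /w; ring.
Qed.

End UnitCircle.

Section ZeroFreeSlices.
Variables (R : rcfType) (a b c d : R[i]).

Lemma slice_sqr_norm_circle u : inT u ->
  `|a + c * u| ^+ 2 - `|b + d * u| ^+ 2 =
  (a * a^* + c * c^* - b * b^* - d * d^*)
  + (a^* * c - d * b^*) * u + (a^* * c - d * b^*)^* * u^*.
Proof.
move=> u1; have uJ : u * u^* = 1 by rewrite -normCK u1 expr1n.
rewrite !normCK !(rmorphB, rmorphD, rmorphM) /= !conjCK.
apply/eqP; rewrite -subr_eq0; apply/eqP.
transitivity ((c * c^* - d * d^*) * (u * u^* - 1)); first by ring.
by rewrite uJ subrr mulr0.
Qed.

Lemma slice_norm_eq_at_zero tau1 tau2 : inT tau1 -> ev11 a b c d tau1 tau2 = 0 ->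
  `|a + c * tau2| = `|b + d * tau2|.
Proof.
move=> tau1_1 p_tau; have -> : a + c * tau2 = - tau1 * (b + d * tau2).
  by apply/eqP; rewrite -subr_eq0 -p_tau /ev11; apply/eqP; ring.
by rewrite normrM normrN tau1_1 mul1r.
Qed.

Hypothesis p_zero_free : forall z1 z2 : R[i], inD z1 -> inD z2 -> ev11 a b c d z1 z2 != 0.

Lemma slice_norm_le_disk w : inD w -> `|b + d * w| <= `|a + c * w|.
Proof.
move=> w_in; rewrite real_leNgt ?normr_real //; apply/negP => lt_ac_bd.
have bd_gt0 : 0 < `|b + d * w| by apply: le_lt_trans lt_ac_bd.
pose z1 := - (a + c * w) / (b + d * w).
have /p_zero_free /(_ w_in) : inD z1.
  by rewrite /inD normrM normrN normfV ltr_pdivrMr // mul1r.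
rewrite /ev11 /z1; apply/negP; rewrite negbK; apply/eqP.
by field; rewrite -normr_gt0.
Qed.

Lemma slice_norm_le_circle u : inT u -> `|b + d * u| <= `|a + c * u|.
Proof.
move=> u1.
have [qa qaE] := sqr_norm_line_poly a (c * u).
have [qb qbE] := sqr_norm_line_poly b (d * u).
suff : 0 <= (qa - qb).[1].
  by rewrite hornerD hornerN subr_ge0 -lecR -qaE -qbE rmorph1 !mul1r ler_sqr ?nnegrE.
apply: (poly_ge0_right_end (ltr01 : 0 < 1 :> R)) => t /andP [t_ge0 t_lt1].
rewrite hornerD hornerN subr_ge0 -lecR -qaE -qbE ler_sqr ?nnegrE // !(mulrCA t%:C%C).
apply: slice_norm_le_disk.
rewrite /inD normrM u1 mulr1 ger0_norm ?ler0c //.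
by rewrite -[1 : R[i]]/(1%:C)%C ltcR.
Qed.

Lemma slice_det_double_root tau1 tau2 :
  inT tau1 -> inT tau2 -> ev11 a b c d tau1 tau2 = 0 ->
  forall z, (c^* + a^* * z) * (a + c * z) - (d^* + b^* * z) * (b + d * z)
            = (a^* * c - d * b^*) * (z - tau2) ^+ 2.
Proof.
move=> tau1_1 tau2_1 p_tau z.
rewrite -(circle_ge0_double_root (B := a * a^* + c * c^* - b * b^* - d * d^*) tau2_1).
- by rewrite !(rmorphB, rmorphM) /= !conjCK; ring.
- move=> u u1; rewrite -slice_sqr_norm_circle // subr_ge0 ler_sqr ?nnegrE //.
  exact: slice_norm_le_circle.
- by rewrite -slice_sqr_norm_circle // (slice_norm_eq_at_zero tau1_1 p_tau) subrr.
Qed.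

End ZeroFreeSlices.

Lemma bshift1_mobius (C : fieldType) (F : C -> C -> C) (al be ga de z1 z2 : C) :
  (forall x, F x z2 = (al + be * x) / (ga + de * x)) ->
  z1 != 0 -> ga != 0 -> ga + de * z1 != 0 ->
  bshift1 F z1 z2 = (be * ga - al * de) / (ga * (ga + de * z1)).
Proof.
move=> FE z1_neq0 ga_neq0 den_neq0; rewrite /bshift1 !FE !mulr0 !addr0.
by field; rewrite z1_neq0 ga_neq0 den_neq0.
Qed.

Theorem lemma4p2 (R : rcfType) (a b c d tau1 tau2 lam : R[i]) :
  (* p has no zeros on D^2 *)
  (forall z1 z2 : R[i], inD z1 -> inD z2 -> ev11 a b c d z1 z2 != 0) ->
  (* p and ptilde are coprime in C[z1,z2] *)
  mcoprime (pol11 a b c d) (ptil11 a b c d) ->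
  (* p vanishes at tau in T^2 *)
  inT tau1 -> inT tau2 -> ev11 a b c d tau1 tau2 = 0 ->
  lam ^+ 2 = conjc a * c - d * conjc b ->
  let p := ev11 a b c d in
  let theta := fun z1 z2 => ev11 (conjc d) (conjc c) (conjc b) (conjc a) z1 z2 / p z1 z2 in
  let f := fun z1 z2 => lam * (z2 - tau2) / p z1 z2 in
  forall z1 z2 : R[i], inD z1 -> inD z2 -> z1 != 0 ->
    bshift1 f z1 z2 = f z1 z2 * (- ((b + d * z2) / (a + c * z2)))
    /\ bshift1 theta z1 z2 = f z1 z2 * lam * ((z2 - tau2) / (a + c * z2)).
Proof.
move=> p_zero_free _ tau1_1 tau2_1 p_tau lam2 p theta f z1 z2 z1_in z2_in z1_neq0.
have slice x : p x z2 = (a + c * z2) + (b + d * z2) * x by rewrite /p /ev11; ring.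
have ga_neq0 : a + c * z2 != 0.
  by have := p_zero_free 0 z2; rewrite -/(p 0 z2) slice mulr0 addr0 /inD normr0 ltr01; apply.
have den_neq0 : (a + c * z2) + (b + d * z2) * z1 != 0.
  by rewrite -slice; apply: p_zero_free.
have f_mobius x : f x z2 = (lam * (z2 - tau2) + 0 * x) / ((a + c * z2) + (b + d * z2) * x).
  by rewrite /f slice mul0r addr0.
have theta_mobius x : theta x z2 =
    ((d^* + b^* * z2) + (c^* + a^* * z2) * x) / ((a + c * z2) + (b + d * z2) * x).
  by rewrite /theta slice /ev11; congr (_ / _); ring.
rewrite (bshift1_mobius f_mobius) // (bshift1_mobius theta_mobius) //.
rewrite (slice_det_double_root p_zero_free tau1_1 tau2_1 p_tau) -lam2 /f slice.
by split; field; rewrite ga_neq0 den_neq0.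
Qed.
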